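(* Let $k$ be a positive integer and let $T = (V, E)$ be a $k$-good graph. Then there exists a multiset $\mathbf{Msets}$ of subsets of $V$ such that: (a) for any two different members $X, Y$ of $\mathbf{Msets}$, $|X \cap Y| < 2$; (b) every $X \in \mathbf{Msets}$ is a clique in $T$; (c) for every $u \in V$, there are exactly $k$ members $X$ of $\mathbf{Msets}$ (counted with multiplicity) with $u \in X$; (d) for every edge $uv \in E$, there is exactly one member $X \in \mathbf{Msets}$ with $u, v \in X$.
   Context: A finite simple undirected graph $T$ is $k$-good if for every vertex $u$ of $T$, the neighbourhood $N_T(u)$ can be partitioned into $k$ pairwise disjoint (possibly empty) subsets $S_1(u), \dots, S_k(u)$ such that each nonempty $S_i(u)$ is a clique of $T$ and no edge of $T$ joins a vertex of $S_i(u)$ to a vertex of $S_j(u)$ for distinct $i,j$. *)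

From mathcomp Require Import all_boot.
Set Implicit Arguments. Unset Strict Implicit. Unset Printing Implicit Defensive.

Definition simple_graph (T : finType) (e : rel T) : Prop :=
  symmetric e /\ irreflexive e.

Definition nbhd (T : finType) (e : rel T) (u : T) : {set T} := [set v | e u v].

Definition is_clique (T : finType) (e : rel T) (X : {set T}) : Prop :=
  forall x y, x \in X -> y \in X -> x != y -> e x y.

Definition k_good (T : finType) (e : rel T) (k : nat) : Prop :=
  forall u : T, exists S : 'I_k -> {set T},
    [/\ (forall i j, i != j -> [disjoint S i & S j]),
        \bigcup_(i < k) S i = nbhd e u,
        (forall i, S i != set0 -> is_clique e (S i)) &
        (forall i j x y, i != j -> x \in S i -> y \in S j -> ~~ e x y)].

From mathcomp Require Import all_boot.
Set Implicit Arguments. Unset Strict Implicit. Unset Printing Implicit Defensive.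

(* In a k-good graph adjacency is transitive inside every neighbourhood, so
   for every edge uv the set {u, v} together with the common neighbours of u
   and v is a clique, and it contains every clique through u and v.  These
   edge cliques therefore pairwise share at most one vertex and cover every
   edge exactly once.  The edge cliques through u correspond to parts of the
   partition of N(u), so at most k of them contain u; padding with copies of
   the singleton {u} brings every vertex to exactly k members. *)

Lemma adj_neq (T : eqType) (e : rel T) u v : irreflexive e -> e u v -> u != v.
Proof. by move=> e_irr; apply: contraTneq => ->; rewrite e_irr. Qed.

Section EdgeCliques.

Variables (T : finType) (e : rel T).

Definition edge_clique (u v : T) : {set T} :=
  [set x | [|| x == u, x == v | e u x && e v x]].

Definition edge_cliques : {set {set T}} :=
  [set edge_clique u v | u in T, v in nbhd e u].

Lemma edge_clique_l u v : u \in edge_clique u v.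
Proof. by rewrite inE eqxx. Qed.

Lemma edge_clique_r u v : v \in edge_clique u v.
Proof. by rewrite inE eqxx orbT. Qed.

Lemma clique_sub_edge_clique X x y :
  is_clique e X -> x \in X -> y \in X -> x != y -> X \subset edge_clique x y.
Proof.
move=> cliqueX xX yX xy; apply/subsetP => z zX; rewrite inE.
case: (eqVneq z x) => //= zx; case: (eqVneq z y) => //= zy.
by rewrite !cliqueX // eq_sym.
Qed.

Lemma mem_edge_cliques u v : e u v -> edge_clique u v \in edge_cliques.
Proof. by move=> euv; apply/imset2P; exists u v; rewrite ?inE. Qed.

Lemma edge_cliquesP X :
  X \in edge_cliques -> exists u v, e u v /\ X = edge_clique u v.
Proof. by case/imset2P => u v _; rewrite inE => euv ->; exists u, v. Qed.

End EdgeCliques.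

Section NbhdPartition.

Variables (T : finType) (e : rel T) (k : nat).

Definition nbhd_partition (u : T) (S : 'I_k -> {set T}) : Prop :=
  [/\ (forall i j, i != j -> [disjoint S i & S j]),
      \bigcup_(i < k) S i = nbhd e u,
      (forall i, S i != set0 -> is_clique e (S i)) &
      (forall i j x y, i != j -> x \in S i -> y \in S j -> ~~ e x y)].

Lemma k_goodP : k_good e k -> forall u, exists S, nbhd_partition u S.
Proof. by []. Qed.

Variables (u : T) (S : 'I_k -> {set T}).
Hypothesis partS : nbhd_partition u S.

Lemma nbhd_partition_part w : e u w -> exists i, w \in S i.
Proof.
case: partS => _ cover _ _ euw.
have : w \in nbhd e u by rewrite inE.
by rewrite -cover => /bigcupP [i _ wi]; exists i.
Qed.

Lemma nbhd_partition_adj i w : w \in S i -> e u w.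
Proof.
case: partS => _ cover _ _ wi.
have : w \in nbhd e u by rewrite -cover; apply/bigcupP; exists i.
by rewrite inE.
Qed.

Lemma nbhd_partition_same_part i j x y :
  e x y -> x \in S i -> y \in S j -> i = j.
Proof.
case: partS => _ _ _ no_cross exy xi yj.
by apply/eqP; apply: contraTT exy => ij; apply: no_cross ij xi yj.
Qed.

Lemma nbhd_partition_clique i x y : x \in S i -> y \in S i -> x != y -> e x y.
Proof.
case: partS => _ _ part_clique _ xi yi.
have nonempty : S i != set0 by apply/set0Pn; exists x.
exact: part_clique nonempty x y xi yi.
Qed.

End NbhdPartition.

Section KGood.

Variables (T : finType) (e : rel T) (k : nat).
Hypotheses (e_sym : symmetric e) (e_irr : irreflexive e) (e_good : k_good e k).

Lemma k_good_nbhd_trans u v x y :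
  e u v -> e u x -> e u y -> e v x -> e v y -> x != y -> e x y.
Proof.
move=> euv eux euy evx evy; have [S partS] := k_goodP e_good u.
have [i vi] := nbhd_partition_part partS euv.
have [j xj] := nbhd_partition_part partS eux.
have [l yl] := nbhd_partition_part partS euy.
have ij := nbhd_partition_same_part partS evx vi xj.
have il := nbhd_partition_same_part partS evy vi yl.
subst j l.
exact: (nbhd_partition_clique partS xj yl).
Qed.

Lemma edge_clique_clique u v : e u v -> is_clique e (edge_clique e u v).
Proof.
move=> euv x y; rewrite !inE.
case/or3P => [/eqP-> | /eqP-> | /andP[eux evx]];
case/or3P => [/eqP-> | /eqP-> | /andP[euy evy]];
  rewrite ?eqxx // => xy; try by [|rewrite e_sym].
exact: (k_good_nbhd_trans euv eux euy evx evy xy).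
Qed.

(* Both inclusions hold because an edge clique contains every clique through
   its two defining vertices. *)
Lemma edge_clique_eq u v x y :
  e u v -> x \in edge_clique e u v -> y \in edge_clique e u v -> x != y ->
  edge_clique e x y = edge_clique e u v.
Proof.
move=> euv xC yC xy.
have sub_xy := clique_sub_edge_clique (edge_clique_clique euv) xC yC xy.
have exy : e x y by apply: edge_clique_clique euv _ _ xC yC xy.
apply/eqP; rewrite eqEsubset sub_xy andbT.
apply: clique_sub_edge_clique (edge_clique_clique exy) _ _ (adj_neq e_irr euv).
  exact: subsetP sub_xy _ (edge_clique_l e u v).
exact: subsetP sub_xy _ (edge_clique_r e u v).
Qed.

Lemma edge_cliques_clique : {in edge_cliques e, forall X, is_clique e X}.
Proof.
by move=> X /edge_cliquesP [u [v [euv ->]]]; apply: edge_clique_clique.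
Qed.

Lemma edge_cliques_eq X x y :
  X \in edge_cliques e -> x \in X -> y \in X -> x != y -> X = edge_clique e x y.
Proof.
case/edge_cliquesP => u [v [euv ->]] xX yX xy.
by rewrite (edge_clique_eq euv xX yX xy).
Qed.

Lemma edge_cliques_meet_lt2 :
  {in edge_cliques e &, forall X Y, X != Y -> #|X :&: Y| < 2}.
Proof.
move=> X Y XF YF; apply: contraNT; rewrite -leqNgt => /card_gt1P [x [y []]].
rewrite !inE => /andP [xX xY] /andP [yX yY] xy.
by rewrite (edge_cliques_eq XF xX yX xy) (edge_cliques_eq YF xY yY xy).
Qed.

Lemma edge_cliques_through_edge u v : e u v ->
  [set X in edge_cliques e | (u \in X) && (v \in X)] = [set edge_clique e u v].
Proof.
move=> euv; apply/setP => X; rewrite !inE; apply/idP/eqP.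
  case/and3P => XF uX vX.
  exact: edge_cliques_eq XF uX vX (adj_neq e_irr euv).
by move->; rewrite mem_edge_cliques // edge_clique_l edge_clique_r.
Qed.

Lemma edge_cliques_at_vertex X u :
  X \in edge_cliques e -> u \in X -> exists w, e u w /\ X = edge_clique e u w.
Proof.
move=> XF uX; have [a [b [eab defX]]] := edge_cliquesP XF.
have [w [wX uw]] : exists w, w \in X /\ u != w.
  case: (eqVneq u a) => [-> | ua]; last by exists a; rewrite defX edge_clique_l.
  by exists b; rewrite defX edge_clique_r (adj_neq e_irr).
exists w; split; first exact: (edge_cliques_clique XF uX wX uw).
exact: edge_cliques_eq XF uX wX uw.
Qed.

(* The edge cliques through u are indexed by the parts of N(u): a part S i
   determines the edge clique of u and any of its members. *)
Lemma card_edge_cliques_at_le u : #|[set X in edge_cliques e | u \in X]| <= k.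
Proof.
have [S partS] := k_goodP e_good u.
pose part_clique i := edge_clique e u (odflt u [pick w in S i]).
apply: (@leq_trans #|[set part_clique i | i in 'I_k]|); last first.
  by apply: leq_trans (leq_imset_card _ _) _; rewrite card_ord.
apply: subset_leq_card; apply/subsetP => X; rewrite inE => /andP [XF uX].
have [w [euw ->]] := edge_cliques_at_vertex XF uX.
have [i wi] := nbhd_partition_part partS euw.
apply/imsetP; exists i => //; rewrite /part_clique.
case: pickP => [w0 w0i | /(_ w)]; last by rewrite wi.
have euw0 := nbhd_partition_adj partS w0i.
have w0C : w0 \in edge_clique e u w.
  rewrite inE euw0 andTb.
  have [-> | w0w] := eqVneq w0 w; first by rewrite /= orbT.
  by rewrite (nbhd_partition_clique partS wi w0i) ?orbT // eq_sym.
by rewrite (edge_clique_eq euw (edge_clique_l e u w) w0C (adj_neq e_irr euw0)).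
Qed.

End KGood.

Lemma count_enum_set (T : finType) (A : {set T}) (p : pred T) :
  count p (enum A) = #|[set x in A | p x]|.
Proof.
rewrite -size_filter -(card_uniqP (filter_uniq _ (enum_uniq (mem A)))).
by apply: eq_card => x; rewrite !inE mem_filter mem_enum andbC.
Qed.

Section SingletonCompletion.

Variables (T : finType) (e : rel T) (k : nat).

Definition singleton_padding (f : T -> nat) : seq {set T} :=
  flatten [seq nseq (f w) [set w] | w <- enum T].

Lemma singleton_paddingP f X :
  X \in singleton_padding f -> exists w, X = [set w].
Proof. by case/flattenP => _ /mapP [w _ ->] /nseqP [-> _]; exists w. Qed.

Lemma count_singleton_padding f u :
  count (fun X : {set T} => u \in X) (singleton_padding f) = f u.
Proof.
rewrite count_flatten -map_comp sumnE big_map big_enum /= (bigD1 u) //=.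
rewrite big1 => [|w wu]; rewrite count_nseq inE ?eqxx ?mul1n ?addn0 //.
by rewrite eq_sym (negbTE wu).
Qed.

Lemma nth_cat_meet_lt2 (s1 s2 : seq {set T}) i j :
  uniq s1 -> {in s1 &, forall X Y : {set T}, X != Y -> #|X :&: Y| < 2} ->
  {in s2, forall X : {set T}, #|X| < 2} ->
  i < size (s1 ++ s2) -> j < size (s1 ++ s2) -> i != j ->
  #|nth set0 (s1 ++ s2) i :&: nth set0 (s1 ++ s2) j| < 2.
Proof.
move=> uniq_s1 meet_s1 small_s2; rewrite size_cat => ilt jlt ij.
have in_s2 m :
    size s1 <= m -> m < size s1 + size s2 -> nth set0 (s1 ++ s2) m \in s2.
  by move=> le_m lt_m; rewrite nth_cat ltnNge le_m mem_nth // ltn_subLR.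
have [is1 | /in_s2 is2] := ltnP i (size s1); last first.
  exact: leq_ltn_trans (subset_leq_card (subsetIl _ _)) (small_s2 _ (is2 ilt)).
have [js1 | /in_s2 js2] := ltnP j (size s1); last first.
  exact: leq_ltn_trans (subset_leq_card (subsetIr _ _)) (small_s2 _ (js2 jlt)).
rewrite !nth_cat is1 js1.
by apply: meet_s1; rewrite ?mem_nth ?nth_uniq.
Qed.

Hypothesis e_irr : irreflexive e.

Lemma singleton_completion (F : {set {set T}}) :
  {in F, forall X, is_clique e X} ->
  {in F &, forall X Y, X != Y -> #|X :&: Y| < 2} ->
  (forall u v, e u v -> #|[set X in F | (u \in X) && (v \in X)]| = 1) ->
  (forall u, #|[set X in F | u \in X]| <= k) ->
  exists Msets : seq {set T},
    [/\ (forall i j, i < size Msets -> j < size Msets -> i != j ->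
           #|nth set0 Msets i :&: nth set0 Msets j| < 2),
        (forall X, X \in Msets -> is_clique e X),
        (forall u, count (fun X : {set T} => u \in X) Msets = k) &
        (forall u v, e u v ->
           count (fun X : {set T} => (u \in X) && (v \in X)) Msets = 1)].
Proof.
move=> F_clique F_meet F_edge F_deg.
pose pad := singleton_padding (fun w => k - #|[set X in F | w \in X]|).
exists (enum F ++ pad); split.
- move=> i j; apply: nth_cat_meet_lt2; first exact: enum_uniq.
    by move=> X Y; rewrite !mem_enum; apply: F_meet.
  by move=> X /singleton_paddingP [w ->]; rewrite cards1.
- move=> X; rewrite mem_cat mem_enum => /orP [/F_clique // |].
  case/singleton_paddingP => w -> x y.
  by rewrite !inE => /eqP-> /eqP->; rewrite eqxx.
- by move=> u; rewrite count_cat count_enum_set count_singleton_padding subnKC.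
- move=> u v euv; rewrite count_cat count_enum_set F_edge //.
  rewrite (@eq_in_count _ _ pred0) ?count_pred0 //.
  move=> X /singleton_paddingP [w ->].
  rewrite !inE; apply: contraNF (adj_neq e_irr euv).
  by case/andP => /eqP-> /eqP->.
Qed.

End SingletonCompletion.

Theorem proposition4p6 (T : finType) (e : rel T) (k : nat) :
  simple_graph e -> 0 < k -> k_good e k ->
  exists Msets : seq {set T},
    [/\ (forall i j, i < size Msets -> j < size Msets -> i != j ->
           #|nth set0 Msets i :&: nth set0 Msets j| < 2),
        (forall X, X \in Msets -> is_clique e X),
        (forall u, count (fun X : {set T} => u \in X) Msets = k) &
        (forall u v, e u v ->
           count (fun X : {set T} => (u \in X) && (v \in X)) Msets = 1)].
Proof.
move=> [e_sym e_irr] _ e_good.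
apply: (singleton_completion e_irr (F := edge_cliques e)).
- exact: edge_cliques_clique.
- exact: edge_cliques_meet_lt2.
- move=> u v euv.
  by rewrite (edge_cliques_through_edge e_sym e_irr e_good euv) cards1.
- exact: card_edge_cliques_at_le.
Qed.
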